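(* Let $k\in[K]$ and suppose the OWA weights satisfy $v_1=\dots=v_{k-1}=0$ and $v_k>0$. Let $\hat\pi$ be an optimal solution of \textsc{Min-Quant}$(k)$~$1|prec|\max w_jT_j$, i.e. $\hat\pi\in\Pi$ minimizes the $k$th largest value among $f(\pi,S_1),\dots,f(\pi,S_K)$. Then $\mathrm{OWA}(\hat\pi)\le (1/v_k)\,\mathrm{OWA}(\pi)$ for every $\pi\in\Pi$. Moreover, the bound is tight: for every $K\ge 2$ there is an instance (with $k=1$, $v_i=1/K$ for all $i$, no precedence constraints, unit processing times and unit weights under all scenarios) and an optimal solution $\hat\pi$ of \textsc{Min-Quant}$(1)$ (= \textsc{Min-Max}) such that $\mathrm{OWA}(\hat\pi)=(1/v_1)\min_{\pi\in\Pi}\mathrm{OWA}(\pi)>0$.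
   Context: Single machine scheduling under scenarios. A set of jobs $J=\{1,\dots,n\}$ must be processed nonpreemptively on one machine, all jobs being available at time $0$; jobs may be subject to precedence constraints given by a partial order ($i\rightarrow j$ means job $j$ cannot start before job $i$ is completed). A schedule is a permutation $\pi$ of $J$ respecting the precedence constraints; $\Pi$ denotes the set of all schedules. A scenario set $\Gamma=\{S_1,\dots,S_K\}$, $K>1$, is given; under scenario $S_i$ job $j$ has a nonnegative processing time $p_j(S_i)$, nonnegative due date $d_j(S_i)$ and nonnegative weight $w_j(S_i)$. $C_j(\pi,S_i)$ is the completion time of $j$ in $\pi$ under $S_i$, i.e. the sum of $p_k(S_i)$ over $k=j$ and all jobs $k$ preceding $j$ in $\pi$. The cost of $\pi$ under $S_i$ is $f(\pi,S_i)=\max_{j\in J} w_j(S_i)[C_j(\pi,S_i)-d_j(S_i)]^+$, where $[x]^+=\max\{0,x\}$. OWA criterion: given weights $\pmb v=(v_1,\dots,v_K)$ with $v_i\in[0,1]$ and $\sum_i v_i=1$, and reals $f_1,\dots,f_K$, let $\sigma$ be a permutation of $[K]$ with $f_{\sigma(1)}\ge\dots\ge f_{\sigma(K)}$ and set $\mathrm{owa}_{\pmb v}(f_1,\dots,f_K)=\sum_{i\in[K]}v_if_{\sigma(i)}$. Set $\mathrm{OWA}(\pi)=\mathrm{owa}_{\pmb v}(f(\pi,S_1),\dots,f(\pi,S_K))$. *)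

From HB Require Import structures.
From mathcomp Require Import all_boot all_order all_algebra all_fingroup.
Set Implicit Arguments. Unset Strict Implicit. Unset Printing Implicit Defensive.
Import Order.TTheory GRing.Theory Num.Theory.
Local Open Scope ring_scope.

(* Jobs are 'I_n, scenarios are 'I_K.  A schedule is a permutation
   s : {perm 'I_n}; s t is the job processed at position t (0-based),
   and (s^-1)%g j is the position of job j. *)

Definition feasible (n : nat) (prec : rel 'I_n) (s : {perm 'I_n}) : Prop :=
  forall i j, prec i j -> (val ((s^-1)%g i) < val ((s^-1)%g j))%N.

Definition strict_partial_order (n : nat) (prec : rel 'I_n) : Prop :=
  (forall i, ~~ prec i i) /\ (forall i j l, prec i j -> prec j l -> prec i l).

Definition completion (R : numDomainType) (n : nat) (p : 'I_n -> R)
    (s : {perm 'I_n}) (j : 'I_n) : R :=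
  \sum_(t < n | (val t <= val ((s^-1)%g j))%N) p (s t).

(* f(pi,S) = max_j w_j [C_j - d_j]^+  (empty max = 0) *)
Definition cost (R : realDomainType) (n : nat) (p d w : 'I_n -> R)
    (s : {perm 'I_n}) : R :=
  \big[Num.max/0]_(j < n) (w j * Num.max (completion p s j - d j) 0).

Definition sorted_desc (R : realDomainType) (K : nat) (f : 'I_K -> R) : seq R :=
  sort (fun x y : R => y <= x) [seq f i | i <- enum 'I_K].

(* OWA: sum_i v_i f_{sigma(i)}, with 0-based index i *)
Definition owa (R : realDomainType) (K : nat) (v f : 'I_K -> R) : R :=
  \sum_(i < K) v i * nth 0 (sorted_desc f) i.

(* the (k+1)-th largest value (k is 0-based) *)
Definition quant (R : realDomainType) (K : nat) (k : nat) (f : 'I_K -> R) : R :=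
  nth 0 (sorted_desc f) k.

Definition costs (R : realDomainType) (n K : nat) (p d w : 'I_K -> 'I_n -> R)
    (s : {perm 'I_n}) : 'I_K -> R :=
  fun i => cost (p i) (d i) (w i) s.

(* The OWA value of a cost vector lies between [v_k] times its [k]-th largest
   entry and that entry itself, because the weights before [v_k] vanish and the
   sorted entries are nonnegative and nonincreasing.  Chaining the two bounds
   through the optimality of [pihat] for the [k]-th largest cost gives the
   factor [1/v_k].  For tightness take two unit jobs: in scenario 0 both are
   due at 1, in the other scenarios job 0 is due at 2 and job 1 at 1.  The
   identity schedule costs 1 everywhere and is min-max optimal, while the swap
   costs 1 only in scenario 0, so the OWA values with uniform weights are 1
   and 1/K. *)
From HB Require Import structures.
From mathcomp Require Import all_boot all_order all_algebra all_fingroup.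
Import Order.TTheory GRing.Theory Num.Theory.
Set Implicit Arguments. Unset Strict Implicit. Unset Printing Implicit Defensive.
Local Open Scope ring_scope.

Section SortedDesc.
Variables (R : realDomainType) (K : nat) (f : 'I_K -> R).

Lemma size_sorted_desc : size (sorted_desc f) = K.
Proof. by rewrite size_sort size_map size_enum_ord. Qed.

Lemma mem_sorted_desc x : (x \in sorted_desc f) = (x \in codom f).
Proof. by rewrite mem_sort codomE. Qed.

Lemma nth_sorted_desc_codom i : (i < K)%N -> exists j, nth 0 (sorted_desc f) i = f j.
Proof.
move=> iK; apply/codomP; rewrite -mem_sorted_desc.
by rewrite mem_nth ?size_sorted_desc.
Qed.

Lemma nth_sorted_desc_ge0 i : (forall j, 0 <= f j) -> 0 <= nth 0 (sorted_desc f) i.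
Proof.
move=> f_ge0; have [iK | Ki] := ltnP i K; last by rewrite nth_default ?size_sorted_desc.
by have [j ->] := nth_sorted_desc_codom iK.
Qed.

Lemma nth_sorted_desc_nonincr (i j : nat) : (i <= j < K)%N ->
  nth 0 (sorted_desc f) j <= nth 0 (sorted_desc f) i.
Proof.
case/andP=> ij jK.
apply: (sorted_leq_nth (leT := fun x y : R => y <= x)) => //.
- by move=> y x z /= yx zy; exact: le_trans zy yx.
- by apply: sort_sorted => x y; exact: le_total.
- by rewrite inE size_sorted_desc (leq_ltn_trans ij).
- by rewrite inE size_sorted_desc.
Qed.

Lemma le_head_sorted_desc i : f i <= nth 0 (sorted_desc f) 0.
Proof.
have fi_in : f i \in sorted_desc f by rewrite mem_sorted_desc codom_f.
rewrite -{1}(nth_index 0 fi_in); apply: nth_sorted_desc_nonincr.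
by move: fi_in; rewrite -index_mem size_sorted_desc.
Qed.

Lemma sum_sorted_desc : \sum_(i < K) nth 0 (sorted_desc f) i = \sum_i f i.
Proof.
have -> : \sum_(i < K) nth 0 (sorted_desc f) i = \sum_(x <- sorted_desc f) x.
  by rewrite (big_nth 0) size_sorted_desc big_mkord.
by rewrite (perm_big _ (permEl (perm_sort _ _))) big_map big_enum.
Qed.

End SortedDesc.

Section OwaQuantile.
Variables (R : realDomainType) (K : nat) (v : 'I_K -> R) (k : 'I_K).
Hypothesis v_ge0 : forall i, 0 <= v i.

Lemma owa_le_quant (f : 'I_K -> R) :
  \sum_i v i = 1 -> (forall i : 'I_K, (i < k)%N -> v i = 0) ->
  owa v f <= quant k f.
Proof.
move=> v_sum1 v_before_k; rewrite /owa -[quant k f]mul1r -v_sum1 mulr_suml.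
apply: ler_sum => i _; have [ik | ki] := ltnP i k; first by rewrite v_before_k ?mul0r.
by rewrite ler_wpM2l // nth_sorted_desc_nonincr // ki ltn_ord.
Qed.

Lemma quant_le_owa (f : 'I_K -> R) :
  (forall i, 0 <= f i) -> v k * quant k f <= owa v f.
Proof.
move=> f_ge0; rewrite /owa (bigD1 k) //= lerDl.
by apply: sumr_ge0 => i _; rewrite mulr_ge0 ?nth_sorted_desc_ge0.
Qed.

End OwaQuantile.

Lemma owa_le_quant_approx (R : realFieldType) (K : nat) (v : 'I_K -> R) (k : 'I_K)
    (fhat f : 'I_K -> R) :
  (forall i, 0 <= v i) -> \sum_i v i = 1 -> (forall i : 'I_K, (i < k)%N -> v i = 0) ->
  0 < v k -> (forall i, 0 <= f i) -> quant k fhat <= quant k f ->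
  owa v fhat <= (v k)^-1 * owa v f.
Proof.
move=> v_ge0 v_sum1 v_before_k vk_gt0 f_ge0 fhat_opt.
rewrite (le_trans (owa_le_quant v_ge0 _ v_sum1 v_before_k)) //.
by rewrite (le_trans fhat_opt) // ler_pdivlMl // quant_le_owa.
Qed.

Lemma owa_uniform (R : realFieldType) (K : nat) (f : 'I_K -> R) :
  owa (fun _ => K%:R^-1) f = K%:R^-1 * \sum_i f i.
Proof. by rewrite /owa -mulr_sumr sum_sorted_desc. Qed.

Lemma cost_ge0 (R : realDomainType) (n : nat) (p d w : 'I_n -> R) s :
  (forall j, 0 <= w j) -> 0 <= cost p d w s.
Proof.
move=> w_ge0; rewrite /cost; elim/big_rec: _ => // j x _ x_ge0.
by rewrite le_max x_ge0 orbT.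
Qed.

Lemma completion_unit (R : numDomainType) (n : nat) (s : {perm 'I_n}) j :
  completion (fun _ => 1 : R) s j = (val ((s^-1)%g j)).+1%:R.
Proof.
rewrite /completion (eq_bigl (fun t : 'I_n => (t < (val ((s^-1)%g j)).+1)%N)) //.
by rewrite -(big_ord_widen _ (fun=> 1 : R)) ?ltn_ord // big_const_ord iter_addr_0.
Qed.

(* Truncated subtraction on [nat] computes the tardiness [C_j - d_j]^+. *)
Lemma cost_unit_nat (R : realDomainType) (n : nat) (D : 'I_n -> nat) s :
  cost (fun _ => 1) (fun j => (D j)%:R) (fun _ => 1) s
  = (\max_j ((val ((s^-1)%g j)).+1 - D j))%:R :> R.
Proof.
rewrite /cost (big_morph _ (@natr_max R) (erefl 0%:R)); apply: eq_bigr => j _.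
rewrite mul1r completion_unit.
have [Dj_le | Dj_gt] := leqP (D j) (val ((s^-1)%g j)).+1.
  by rewrite natrB // max_l // subr_ge0 ler_nat.
by rewrite (eqP (ltnW Dj_gt)) max_r // subr_le0 ler_nat ltnW.
Qed.

Definition tight_due (K : nat) (i : 'I_K) (j : 'I_2) : nat :=
  if (val i == 0)%N || (val j != 0)%N then 1 else 2.

Definition tight_costs (R : realDomainType) (K : nat) (s : {perm 'I_2}) : 'I_K -> R :=
  costs (fun _ _ => 1) (fun i j => (tight_due i j)%:R) (fun _ _ => 1) s.

Section TightInstance.
Variables (R : realFieldType) (K : nat).
Hypothesis K_gt0 : (0 < K)%N.

Let i0 : 'I_K := Ordinal K_gt0.
Local Notation c := (@tight_costs R K).

Lemma tight_costs_id i : c 1%g i = 1.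
Proof.
rewrite /tight_costs /costs cost_unit_nat invg1 !big_ord_recl big_ord0 !perm1.
by rewrite /tight_due /=; case: (val i == 0)%N.
Qed.

Lemma tight_costs_swap i :
  c (tperm ord0 ord_max) i = (val i == 0)%N%:R.
Proof.
rewrite /tight_costs /costs cost_unit_nat tpermV !big_ord_recl big_ord0.
have -> : lift ord0 ord0 = ord_max :> 'I_2 by apply: val_inj.
by rewrite tpermL tpermR /tight_due /=; case: (val i == 0)%N.
Qed.

Lemma tight_costs0_ge1 s : 1 <= c s i0.
Proof.
rewrite /tight_costs /costs cost_unit_nat ler1n.
apply: leq_trans (leq_bigmax (s ord_max)).
by rewrite permK /tight_due.
Qed.

Lemma tight_sum_id : \sum_i c 1%g i = K%:R.
Proof. by under eq_bigr do rewrite tight_costs_id; rewrite sumr_const card_ord. Qed.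

Lemma tight_sum_swap : \sum_i c (tperm ord0 ord_max) i = 1.
Proof.
rewrite (bigD1 i0) //= big1 ?tight_costs_swap ?addr0 // => i i_neq0.
rewrite tight_costs_swap; case: eqP => // i_eq0.
by move: i_neq0; rewrite -val_eqE /= i_eq0.
Qed.

Lemma tight_sum_ge1 s : 1 <= \sum_i c s i.
Proof.
rewrite (bigD1 i0) //= (le_trans (tight_costs0_ge1 s)) // lerDl.
by apply: sumr_ge0 => i _; exact: cost_ge0.
Qed.

End TightInstance.

Theorem theorem7 (R : realFieldType) :
  (forall (n K : nat) (prec : rel 'I_n) (p d w : 'I_K -> 'I_n -> R)
     (v : 'I_K -> R) (k : 'I_K) (pihat : {perm 'I_n}),
     (1 < K)%N ->
     strict_partial_order prec ->
     (forall i j, 0 <= p i j) -> (forall i j, 0 <= d i j) ->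
     (forall i j, 0 <= w i j) ->
     (forall i, 0 <= v i <= 1) -> \sum_(i < K) v i = 1 ->
     (forall i : 'I_K, (val i < val k)%N -> v i = 0) -> 0 < v k ->
     feasible prec pihat ->
     (forall pi, feasible prec pi ->
        quant (val k) (costs p d w pihat) <= quant (val k) (costs p d w pi)) ->
     forall pi, feasible prec pi ->
       owa v (costs p d w pihat) <= (v k)^-1 * owa v (costs p d w pi))
  /\
  (forall K : nat, (2 <= K)%N ->
     let v : 'I_K -> R := fun _ => K%:R^-1 in
     exists n (d : 'I_K -> 'I_n -> R),
       let one : 'I_K -> 'I_n -> R := fun _ _ => 1 in
       (forall i j, 0 <= d i j) /\
       exists pihat : {perm 'I_n},
         feasible (fun _ _ => false) pihat /\
         (forall pi, feasible (fun _ _ => false) pi ->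
            quant 0 (costs one d one pihat) <= quant 0 (costs one d one pi)) /\
         exists pistar : {perm 'I_n},
           feasible (fun _ _ => false) pistar /\
           (forall pi, feasible (fun _ _ => false) pi ->
              owa v (costs one d one pistar) <= owa v (costs one d one pi)) /\
           0 < owa v (costs one d one pistar) /\
           owa v (costs one d one pihat) = K%:R * owa v (costs one d one pistar)).
Proof.
split.
  move=> n K prec p d w v k pihat _ _ _ _ w_ge0 v_01 v_sum1 v_before_k vk_gt0 _.
  move=> pihat_opt pi pi_feas; apply: owa_le_quant_approx => //.
  - by move=> i; case/andP: (v_01 i).
  - by move=> i; exact: cost_ge0.
  - exact: pihat_opt.
move=> K K_ge2; cbv zeta; exists 2%N, (fun i j => (tight_due i j)%:R).
have K_gt0 : (0 < K)%N by exact: ltnW.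
split=> [i j | ]; first exact: ler0n.
exists 1%g; split=> //; split.
  move=> pi _; rewrite /quant -!/(tight_costs R _).
  have [j ->] := nth_sorted_desc_codom (tight_costs R 1%g) K_gt0.
  rewrite tight_costs_id (le_trans (tight_costs0_ge1 _ K_gt0 pi)) //.
  exact: le_head_sorted_desc.
exists (tperm ord0 ord_max); split=> //.
rewrite !owa_uniform -!/(tight_costs R _) tight_sum_id (tight_sum_swap _ K_gt0).
split=> [pi _ | ].
  by rewrite owa_uniform -/(tight_costs R _) ler_wpM2l ?invr_ge0 ?ler0n ?tight_sum_ge1.
by rewrite mulr1 invr_gt0 ltr0n K_gt0 mulrC.
Qed.
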